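(* Let $ABC$ be a triangle and let $P$ be a point. Let $H_A, H_B, H_C$ be the orthocenters of the triangles $BPC$, $CPA$, $PAB$ respectively. Let $G_A, G_B, G_C$ be the centroids of the triangles $AH_BH_C$, $BH_CH_A$, $CH_AH_B$ respectively, and let $G$ be the centroid of $ABC$. Then $G_A, G_B, G_C, G$ lie on a circle.
   Context: All triangles involved are assumed nondegenerate. *)

From HB Require Import structures.
From mathcomp Require Import all_boot all_order all_algebra.
Set Implicit Arguments. Unset Strict Implicit. Unset Printing Implicit Defensive.
Import Order.TTheory GRing.Theory Num.Theory.
Local Open Scope ring_scope.

Definition pt (R : realFieldType) := (R * R)%type.

Section Geo.
Variable R : realFieldType.

Definition pdot (u v : pt R) : R := u.1 * v.1 + u.2 * v.2.
Definition vsub (u v : pt R) : pt R := (u.1 - v.1, u.2 - v.2).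
Definition sqdist (u v : pt R) : R := pdot (vsub u v) (vsub u v).

(* signed (doubled) area; nonzero iff the triangle ABC is nondeg_triangle *)
Definition area2 (A B C : pt R) : R :=
  (B.1 - A.1) * (C.2 - A.2) - (B.2 - A.2) * (C.1 - A.1).
Definition nondeg_triangle (A B C : pt R) : Prop := area2 A B C != 0.

(* H is the orthocenter of triangle ABC: it lies on the altitudes from A
   and from B (hence, for a nondeg_triangle triangle, on all three). *)
Definition is_orthocenter (H A B C : pt R) : Prop :=
  pdot (vsub H A) (vsub B C) = 0 /\ pdot (vsub H B) (vsub C A) = 0.

Definition centroid (A B C : pt R) : pt R :=
  ((A.1 + B.1 + C.1) / 3%:R, (A.2 + B.2 + C.2) / 3%:R).

Definition concyclic4 (W X Y Z : pt R) : Prop :=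
  exists (O : pt R) (r : R), 0 < r /\
    sqdist W O = r /\ sqdist X O = r /\ sqdist Y O = r /\ sqdist Z O = r.
End Geo.

(* The offset G_A - G = ((H_B - C) + (H_C - B)) / 3 is perpendicular to PA, because
   H_B - C and H_C - B lie along altitudes of CPA and PAB.  Hence G_A is the foot of the
   perpendicular from G to the line through G_A parallel to PA, and likewise for G_B, G_C.
   These three lines concur at some point Q: with a = A - P, b = B - P, c = C - P, the
   orthocenter of PAC satisfies cross (H_B - P) a = (a.c) (a.c - a.a) / cross a c, and
   after these substitutions the concurrency criterion is a rational identity in a, b, c.
   So G_A, G_B, G_C lie on the circle with diameter GQ, which passes through G. *)

From HB Require Import structures.
From mathcomp Require Import all_boot all_order all_algebra.
From mathcomp Require Import ring.
Import Order.TTheory GRing.Theory Num.Theory.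
Local Open Scope ring_scope.

Set Implicit Arguments.
Unset Strict Implicit.

Section PlaneGeometry.
Variable R : realFieldType.
Implicit Types A B C G O P Q H W X Y Z u v w d : pt R.

Definition cross u v : R := u.1 * v.2 - u.2 * v.1.

Definition lines_concur X u Y v Z w : Prop :=
  exists Q, [/\ cross (vsub X Q) u = 0, cross (vsub Y Q) v = 0 & cross (vsub Z Q) w = 0].

Lemma cross_mul u v w d :
  cross u v * cross w d = pdot u w * pdot v d - pdot u d * pdot v w.
Proof. by rewrite /cross /pdot; ring. Qed.

Lemma pdot_self_eq0 u : pdot u u = 0 -> u = 0.
Proof.
case: u => x y; rewrite /pdot /= -!expr2 => /eqP.
by rewrite paddr_eq0 ?sqr_ge0 // !sqrf_eq0 => /andP[/eqP-> /eqP->].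
Qed.

Lemma cross_neq0 u v : cross u v != 0 -> u != 0 /\ v != 0.
Proof.
by move=> uv; split; apply: contraNneq uv => ->; rewrite /cross /= !(mul0r, mulr0) subrr.
Qed.

Lemma pdot_self_ge0 u : 0 <= pdot u u.
Proof. by rewrite /pdot -!expr2 addr_ge0 ?sqr_ge0. Qed.

Lemma sqdist_eq0 X Y : sqdist X Y = 0 -> X = Y.
Proof. by move/pdot_self_eq0/subr0_eq. Qed.

Lemma pdot_eq0_of_parallel u v d :
  d != 0 -> pdot u d = 0 -> cross v d = 0 -> pdot u v = 0.
Proof.
move=> d_neq0 ud0 vd0; have := cross_mul u d v d.
rewrite vd0 ud0 mulr0 mul0r subr0 => /esym/eqP; rewrite mulf_eq0 => /orP[/eqP//|].
by move/eqP/pdot_self_eq0; apply/contra_eq.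
Qed.

Definition midpoint X Y : pt R := ((X.1 + Y.1) / 2, (X.2 + Y.2) / 2).

Lemma sqdist_midpoint_right_angle Z G Q :
  pdot (vsub Z G) (vsub Z Q) = 0 ->
  sqdist Z (midpoint G Q) = sqdist G (midpoint G Q).
Proof.
move=> right_angle; apply/eqP; rewrite -subr_eq0 -[X in _ == X]right_angle.
by apply/eqP; rewrite /sqdist /pdot /vsub /=; field.
Qed.

Lemma concyclic4_diameter W X Y G Q :
  pdot (vsub W G) (vsub W Q) = 0 -> pdot (vsub X G) (vsub X Q) = 0 ->
  pdot (vsub Y G) (vsub Y Q) = 0 -> concyclic4 W X Y G.
Proof.
set M := midpoint G Q => /sqdist_midpoint_right_angle eW
  /sqdist_midpoint_right_angle eX /sqdist_midpoint_right_angle eY.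
have [r0|r_neq0] := eqVneq (sqdist G M) 0; last first.
  exists M, (sqdist G M); rewrite lt0r r_neq0 pdot_self_ge0.
  by rewrite -/M in eW eX eY.
(* all four points coincide with [M]; any circle through [M] will do *)
rewrite -/M r0 in eW eX eY.
move: eW eX eY r0 => /sqdist_eq0-> /sqdist_eq0-> /sqdist_eq0-> /sqdist_eq0->.
have M_unit : sqdist M (M.1 + 1, M.2) = 1 by rewrite /sqdist /pdot /vsub /=; ring.
by exists (M.1 + 1, M.2), 1; rewrite ltr01 M_unit.
Qed.

Lemma lines_concur_of_cycle O X Y Z u v w :
  cross u v != 0 ->
  cross (vsub X O) u * cross v w + cross (vsub Y O) v * cross w u
    + cross (vsub Z O) w * cross u v = 0 ->
  lines_concur X u Y v Z w.
Proof.
move=> uv_neq0 cycle.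
set k := cross (vsub X O) u in cycle; set m := cross (vsub Y O) v in cycle.
(* [Q - O = (m u - k v) / cross u v] solves [cross (Q - O) u = k], [cross (Q - O) v = m] *)
pose Q := (O.1 + (m * u.1 - k * v.1) / cross u v, O.2 + (m * u.2 - k * v.2) / cross u v).
exists Q; split.
- by rewrite /Q /k /cross /vsub /=; field.
- by rewrite /Q /m /cross /vsub /=; field.
apply: (mulIf uv_neq0); rewrite mul0r -[RHS]cycle.
by rewrite /Q /k /m /cross /vsub /=; field.
Qed.

Lemma concyclic4_of_lines_concur G X Y Z u v w :
  u != 0 -> v != 0 -> w != 0 ->
  pdot (vsub X G) u = 0 -> pdot (vsub Y G) v = 0 -> pdot (vsub Z G) w = 0 ->
  lines_concur X u Y v Z w -> concyclic4 X Y Z G.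
Proof.
move=> u0 v0 w0 Xu Yv Zw [Q [XQ YQ ZQ]].
apply: (@concyclic4_diameter X Y Z G Q).
- exact: pdot_eq0_of_parallel u0 Xu XQ.
- exact: pdot_eq0_of_parallel v0 Yv YQ.
- exact: pdot_eq0_of_parallel w0 Zw ZQ.
Qed.

Lemma area2_rot A B C : area2 A B C = area2 B C A.
Proof. by rewrite /area2; ring. Qed.

Lemma pdot_vsubC u X Y : pdot u (vsub X Y) = - pdot u (vsub Y X).
Proof. by rewrite /pdot /vsub /=; ring. Qed.

Lemma centroid_rot A B C : centroid A B C = centroid B C A.
Proof. by rewrite /centroid; congr (_, _); ring. Qed.

Lemma pdot_centroid_offset A B C X Y d :
  pdot (vsub (centroid A X Y) (centroid A B C)) d
    = (pdot (vsub X C) d + pdot (vsub Y B) d) / 3%:R.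
Proof. by rewrite /pdot /vsub /centroid /=; field. Qed.

Lemma cross_centroid A X Y P :
  cross (vsub (centroid A X Y) P) (vsub A P)
    = (cross (vsub X P) (vsub A P) + cross (vsub Y P) (vsub A P)) / 3%:R.
Proof. by rewrite /cross /vsub /centroid /=; field. Qed.

Lemma is_orthocenter_altitude H A B C :
  is_orthocenter H A B C -> pdot (vsub H C) (vsub A B) = 0.
Proof.
case=> altA altB; transitivity (- (pdot (vsub H A) (vsub B C) + pdot (vsub H B) (vsub C A))).
  by rewrite /pdot /vsub /=; ring.
by rewrite altA altB addr0 oppr0.
Qed.

Lemma is_orthocenter_rot H A B C :
  is_orthocenter H A B C -> is_orthocenter H B C A.
Proof. by move=> orthoH; split; [case: orthoH | exact: is_orthocenter_altitude]. Qed.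

Lemma cross_orthocenter H X Y P :
  is_orthocenter H X Y P -> area2 P X Y != 0 ->
  let x := vsub X P in let y := vsub Y P in
  cross (vsub H P) x = pdot x y * (pdot x y - pdot x x) / cross x y /\
  cross (vsub H P) y = pdot x y * (pdot y y - pdot x y) / cross x y.
Proof.
case=> altX altY XY_neq0 x y; rewrite {}/x {}/y.
have {}XY_neq0 : cross (vsub X P) (vsub Y P) != 0 := XY_neq0.
have hx : pdot (vsub H P) (vsub X P) = pdot (vsub X P) (vsub Y P).
  apply: subr0_eq; transitivity (- pdot (vsub H Y) (vsub P X)).
    by rewrite /pdot /vsub /=; ring.
  by rewrite altY oppr0.
have hy : pdot (vsub H P) (vsub Y P) = pdot (vsub X P) (vsub Y P).
  apply: subr0_eq; rewrite -altX /pdot /vsub /=; ring.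
split; apply: (mulIf XY_neq0); rewrite divfK //;
  by rewrite cross_mul hx hy /pdot /vsub /=; ring.
Qed.

Section OrthocenterConfiguration.
Variables A B C P HA HB HC : pt R.
Hypotheses (orthoA : is_orthocenter HA B P C) (orthoB : is_orthocenter HB C P A)
  (orthoC : is_orthocenter HC P A B).

Lemma centroid_offsets_perp :
  [/\ pdot (vsub (centroid A HB HC) (centroid A B C)) (vsub A P) = 0,
      pdot (vsub (centroid B HC HA) (centroid A B C)) (vsub B P) = 0 &
      pdot (vsub (centroid C HA HB) (centroid A B C)) (vsub C P) = 0].
Proof.
have altA := is_orthocenter_altitude orthoA; case: orthoA => altAB _.
have altB := is_orthocenter_altitude orthoB; case: orthoB => altBC _.
have altC := is_orthocenter_altitude orthoC; case: orthoC => _ altCA.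
split.
- by rewrite pdot_centroid_offset !(pdot_vsubC _ A) altBC altC oppr0 addr0 mul0r.
- by rewrite [centroid A B C]centroid_rot pdot_centroid_offset altCA altA addr0 mul0r.
- rewrite [centroid A B C]centroid_rot [centroid B C A]centroid_rot.
  by rewrite pdot_centroid_offset (pdot_vsubC _ C) altAB altB oppr0 addr0 mul0r.
Qed.

Hypotheses (nondegA : nondeg_triangle B P C) (nondegB : nondeg_triangle C P A)
  (nondegC : nondeg_triangle P A B).

Lemma centroid_lines_concur :
  lines_concur (centroid A HB HC) (vsub A P) (centroid B HC HA) (vsub B P)
    (centroid C HA HB) (vsub C P).
Proof.
have dA : cross (vsub C P) (vsub B P) != 0.
  by change (area2 P C B != 0); rewrite -area2_rot.
have dB : cross (vsub A P) (vsub C P) != 0.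
  by change (area2 P A C != 0); rewrite -area2_rot.
have dC : cross (vsub A P) (vsub B P) != 0 := nondegC.
have [ha_c ha_b] := cross_orthocenter (is_orthocenter_rot (is_orthocenter_rot orthoA)) dA.
have [hb_a hb_c] := cross_orthocenter (is_orthocenter_rot (is_orthocenter_rot orthoB)) dB.
have [hc_a hc_b] := cross_orthocenter (is_orthocenter_rot orthoC) dC.
apply: (@lines_concur_of_cycle P) => //.
rewrite !cross_centroid {}ha_c {}ha_b {}hb_a {}hb_c {}hc_a {}hc_b.
move: (vsub A P) (vsub B P) (vsub C P) dA dB dC => a b c.
rewrite /cross /pdot => dA dB dC.
by field; rewrite dA dB dC.
Qed.

End OrthocenterConfiguration.

End PlaneGeometry.

Theorem theorem3p1 (R : realFieldType) (A B C P HA HB HC : pt R) :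
  nondeg_triangle A B C ->
  nondeg_triangle B P C -> nondeg_triangle C P A -> nondeg_triangle P A B ->
  is_orthocenter HA B P C -> is_orthocenter HB C P A -> is_orthocenter HC P A B ->
  nondeg_triangle A HB HC -> nondeg_triangle B HC HA -> nondeg_triangle C HA HB ->
  concyclic4 (centroid A HB HC) (centroid B HC HA) (centroid C HA HB)
             (centroid A B C).
Proof.
move=> _ nondegA nondegB nondegC orthoA orthoB orthoC _ _ _.
have [dirA dirB] := @cross_neq0 _ (vsub A P) (vsub B P) nondegC.
have [_ dirC] : vsub A P != 0 /\ vsub C P != 0.
  by apply: cross_neq0; change (area2 P A C != 0); rewrite -area2_rot.
have [perpA perpB perpC] := centroid_offsets_perp orthoA orthoB orthoC.
apply: concyclic4_of_lines_concur dirA dirB dirC perpA perpB perpC _.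
exact: centroid_lines_concur.
Qed.
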